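(* Let $p\ge 3$ be a prime, $n\ge 2$ an integer, and $N=p^nN_1$, where either $N_1=1$ or $N_1=q_1q_2\cdots q_r$ with $q_1,\dots,q_r$ distinct primes different from $p$ such that $(q_i-1)\mid(p-1)$ for every $i$. Let $a,b$ be integers with $a\not\equiv 0,-1 \pmod p$ and $a\not\equiv -1\pmod{q_i}$ for every $i$, and let $\pi(x)=x^p+ax+b$ (such a $\pi$ permutes $\mathbb{Z}_N$). Let $\mathbf{s}$ be a Zadoff–Chu sequence of length $N$. Then (i) the interleaved sequence $\mathbf{s}\circ\pi$ is a CAZAC sequence; (ii) the interleaved sequence $\mathbf{s}\circ\pi^{-1}$ is a CAZAC sequence.
   Context: $\xi_N=e^{-2\pi\sqrt{-1}/N}$, and $\xi_N^{x/2}$ means $e^{-\pi\sqrt{-1}x/N}$. A Zadoff–Chu (ZC) sequence of length $N$ is $\mathbf{s}=(s(0),\dots,s(N-1))$ with $s(k)=\xi_N^{f(k)}$, $f(k)=u\,(k^2+(N\bmod 2)k+2lk)/2$, where $u$ is an integer with $\gcd(u,N)=1$ and $l$ is an arbitrary integer. A polynomial $\pi\in\mathbb{Z}_N[x]$ is a permutation polynomial (PP) over $\mathbb{Z}_N$ if $k\mapsto \pi(k)\bmod N$ is a bijection of $\mathbb{Z}_N=\{0,\dots,N-1\}$; $\pi^{-1}$ denotes the inverse permutation of $\mathbb{Z}_N$. For a permutation $\sigma$ of $\mathbb{Z}_N$, the interleaved sequence $\mathbf{s}\circ\sigma$ has $k$-th term $s(\sigma(k))$. The periodic auto-correlation of a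 length-$N$ sequence $\mathbf{y}$ is $\theta(d)=\sum_{k=0}^{N-1}y(k)y^*(k+d)$ with indices mod $N$. A sequence is CAZAC if all entries have modulus 1 and $\theta(d)=0$ for all $0<d<N$. *)

From HB Require Import structures.
From mathcomp Require Import all_boot all_order all_algebra.
From mathcomp Require Import reals trigo complex.
Set Implicit Arguments.
Unset Strict Implicit.
Unset Printing Implicit Defensive.
Import Order.TTheory GRing.Theory Num.Theory.
Local Open Scope ring_scope.
Local Open Scope complex_scope.

(* zeta2 N = e^{-pi sqrt(-1)/N} = xi_N^{1/2}; so xi_N^{x/2} = (zeta2 N)^x *)
Definition zeta2 (R : realType) (N : nat) : R[i] :=
  (cos (pi / N%:R)) -i* (sin (pi / N%:R)).

(* Zadoff-Chu sequence: s(k) = xi_N^{f(k)},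
   f(k) = u (k^2 + (N mod 2) k + 2 l k) / 2 *)
Definition zc (R : realType) (N : nat) (u l : int) (k : nat) : R[i] :=
  zeta2 R N ^ (u * ((k ^ 2)%N%:Z + (N %% 2)%N%:Z * k%:Z + 2 * l * k%:Z)).

Definition autocorr (R : realType) (N : nat) (y : nat -> R[i]) (d : nat) : R[i] :=
  \sum_(k < N) y k * (y ((k + d) %% N)%N)^*.

Definition CAZAC (R : realType) (N : nat) (y : nat -> R[i]) : Prop :=
  (forall k, (k < N)%N -> `|y k| = 1) /\
  (forall d, (0 < d)%N -> (d < N)%N -> autocorr N y d = 0).

Definition ppmap (N p : nat) (a b : int) (k : nat) : nat :=
  absz ((k%:Z ^+ p + a * k%:Z + b) %% N%:Z)%Z.

From HB Require Import structures.
From mathcomp Require Import all_boot all_order all_algebra.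
From mathcomp Require Import reals trigo complex.
From mathcomp Require Import ring lra.
Import Order.TTheory GRing.Theory Num.Theory.
Local Open Scope ring_scope.

(** With zeta = e^(-i pi/N) and the phase phi(x) = x^2 + c x, where c = N mod 2 + 2l makes
    N + c even so that phi mod 2N only depends on x mod N, the Zadoff-Chu sequence is
    s(k) = zeta^(u phi(k)), and every autocorrelation of s o pi or s o pi^-1 is a sum of
    terms zeta^(u (phi(A k) - phi(B k))).  For each lag 0 < d < N we find a shift S such
    that replacing k by k + S multiplies every term by the same root of unity
    zeta^(-2ug) <> 1, so the sum vanishes: if p^n does not divide d, then S = N / p^(j+1)
    with j = v_p(d); otherwise some q_i does not divide d and S = N / q_i.  The required
    congruences come from two facts about pi(x) = x^p + a x + b: pi(x + h) - pi(x) is h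
    times a unit mod p (as p divides neither a nor a + 1), and mod q_i, x^p = x (as
    q_i - 1 divides p - 1), so pi is affine with slope 1 + a, a unit.  The same two facts
    show that pi permutes Z_N. *)

Lemma PoszX (m k : nat) : (m ^ k)%N%:Z = m%:Z ^+ k.
Proof. by rewrite -!natz natrX. Qed.

Lemma Euclid_dvdzM (r : nat) (m k : int) : prime r ->
  (r%:Z %| m * k)%Z = (r%:Z %| m)%Z || (r%:Z %| k)%Z.
Proof. by move=> r_pr; rewrite !dvdzE abszM Euclid_dvdM. Qed.

Lemma coprimez_primeX (r k : nat) (m : int) : prime r -> ~~ (r%:Z %| m)%Z ->
  coprimez (r%:Z ^+ k) m.
Proof. by move=> r_pr rNm; rewrite coprimezXl // coprimezE prime_coprime. Qed.

Lemma dvdz_subX {d x y : int} k : (d %| x - y)%Z -> (d %| x ^+ k - y ^+ k)%Z.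
Proof. by move=> dxy; rewrite subrXX dvdz_mulr. Qed.

Lemma dvdz_binomial_mid (d x y : int) n :
  (forall i, (0 < i < n.+1)%N -> (d %| x ^+ (n.+1 - i) * y ^+ i *+ 'C(n.+1, i))%Z) ->
  (d %| (x + y) ^+ n.+1 - x ^+ n.+1 - y ^+ n.+1)%Z.
Proof.
move=> dmid; rewrite exprDn big_ord_recl big_ord_recr /= subn0 subnn bin0 binn.
rewrite !expr0 mulr1 mul1r !mulr1n; set s := \sum_(i < n) _.
rewrite (_ : x ^+ n.+1 + (s + y ^+ n.+1) - x ^+ n.+1 - y ^+ n.+1 = s); last by ring.
by apply: rpred_sum => i _; apply: dmid; rewrite /bump /= add1n ltnS ltn_ord.
Qed.

Lemma dvdz_mul_exprD (x y : int) n : (x * y %| (x + y) ^+ n.+1 - x ^+ n.+1 - y ^+ n.+1)%Z.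
Proof.
apply: dvdz_binomial_mid => i /andP[i_gt0 i_lt].
by rewrite -mulr_natr dvdz_mulr // dvdz_mul // dvdz_exp // subn_gt0.
Qed.

Lemma dvdz_prime_exprD (p : nat) (x y : int) : prime p ->
  (p%:Z * x * y %| (x + y) ^+ p - x ^+ p - y ^+ p)%Z.
Proof.
case: p => [//|p] p_pr; apply: dvdz_binomial_mid => i /andP[i_gt0 i_lt].
rewrite -mulr_natr mulrC -mulrA dvdz_mul ?dvdz_mul ?dvdz_exp ?subn_gt0 //.
by rewrite natz dvdzE prime_dvd_bin // i_gt0.
Qed.

Lemma dvdz_prime_exprD2 (p : nat) (x h k : int) : prime p ->
  (p%:Z * h * k %| (x + h + k) ^+ p - (x + h) ^+ p - (x + k) ^+ p + x ^+ p)%Z.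
Proof.
move=> p_pr.
have -> : (x + h + k) ^+ p - (x + h) ^+ p - (x + k) ^+ p + x ^+ p =
    \sum_(i < p.+1) (x ^+ (p - i) * ((h + k) ^+ i - h ^+ i - k ^+ i)) *+ 'C(p, i) + x ^+ p.
  rewrite -(addrA x h k) !exprDn; congr (_ + _); rewrite -!sumrB; apply: eq_bigr => i _.
  by rewrite -!mulrnBl; congr (_ *+ _); ring.
case: p p_pr => [//|p] p_pr.
rewrite big_ord_recl big_ord_recr /= subn0 subnn bin0 binn !expr0 mul1r !mulr1n.
rewrite (_ : forall c s t : int, c * (1 - 1 - 1) + (s + t) + c = s + t); last by move=> *; ring.
rewrite rpredD ?dvdz_prime_exprD //.
apply: rpred_sum => i _; rewrite -mulrA -mulr_natr mulrC dvdz_mul ?dvdz_mull ?dvdz_mul_exprD //.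
by rewrite natz dvdzE prime_dvd_bin //= /bump add1n ltnS ltn_ord.
Qed.

Lemma fermat_littlez (r : nat) (x : int) : prime r -> (r%:Z %| x ^+ r - x)%Z.
Proof.
move=> r_pr; rewrite -eqz_mod_dvd -modzXm.
have r_neq0 : r%:Z != 0 by rewrite eqz_nat -lt0n prime_gt0.
case: (x %% r)%Z (modz_mod x r) (modz_ge0 x r_neq0) => // m mE _.
by rewrite -{2}mE -PoszX !modz_nat fermat_little.
Qed.

Lemma fermat_littlez_gen (r p : nat) (x : int) : prime r -> (r.-1 %| p.-1)%N -> (0 < p)%N ->
  (r%:Z %| x ^+ p - x)%Z.
Proof.
move=> r_pr /dvdnP[t t_eq] /prednK <-; rewrite t_eq {t_eq}.
have /prednK r_eq := prime_gt0 r_pr.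
elim: t => [|t IHt]; first by rewrite mul0n expr1 subrr dvdz0.
have -> : x ^+ (t.+1 * r.-1).+1 - x = (x ^+ (t * r.-1).+1 - x) * x ^+ r.-1 + (x ^+ r - x).
  have -> : x ^+ r = x * x ^+ r.-1 by rewrite -exprS r_eq.
  by rewrite mulSn -addnS exprD; ring.
by rewrite rpredD ?dvdz_mulr ?fermat_littlez.
Qed.

Lemma coprime_prod_primes (q : nat) (qs : seq nat) : prime q -> all prime qs -> q \notin qs ->
  coprime q (\prod_(r <- qs) r).
Proof.
move=> q_pr; elim: qs => [|r qs IHqs]; first by rewrite big_nil coprimen1.
rewrite big_cons inE negb_or /= => /andP[r_pr qs_pr] /andP[q_neq_r q_notin].
by rewrite coprimeMr IHqs // andbT prime_coprime // dvdn_prime2.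
Qed.

Lemma prod_primes_dvdn (qs : seq nat) (m : nat) : uniq qs -> all prime qs ->
  (forall q, q \in qs -> (q %| m)%N) -> (\prod_(q <- qs) q %| m)%N.
Proof.
elim: qs => [|q qs IHqs] /=; first by rewrite big_nil dvd1n.
move=> /andP[q_notin qs_uniq] /andP[q_pr qs_pr] qs_dvd.
rewrite big_cons Gauss_dvd ?coprime_prod_primes // qs_dvd ?mem_head //=.
by apply: IHqs => // r r_in; rewrite qs_dvd // inE r_in orbT.
Qed.

Lemma prod_primes_gt0 (qs : seq nat) : all prime qs -> (0 < \prod_(q <- qs) q)%N.
Proof. by move=> qs_prime; rewrite big_seq prodn_cond_gt0 // => q /(allP qs_prime)/prime_gt0. Qed.

Lemma coprimez_prime_dvdN (u : int) (r N : nat) : prime r -> (r %| N)%N -> coprimez u N ->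
  ~~ (r%:Z %| u)%Z.
Proof.
by move=> r_prime rN /(coprimez_dvdr rN); rewrite coprimez_sym coprimezE prime_coprime.
Qed.

Lemma eqn_dvdz_small {N x y : nat} : (x < N)%N -> (y < N)%N -> (N%:Z %| x%:Z - y%:Z)%Z -> x = y.
Proof. by move=> x_lt y_lt; rewrite -eqz_mod_dvd !modz_nat !modn_small // eqz_nat => /eqP. Qed.

Lemma dvdz_sub_trans (d x y z : int) : (d %| x - y)%Z -> (d %| y - z)%Z -> (d %| x - z)%Z.
Proof. by move=> dxy dyz; rewrite -[x](subrK y) -addrA rpredD. Qed.

Lemma dvdz_subC (d x y : int) : (d %| x - y)%Z = (d %| y - x)%Z.
Proof. by rewrite -opprB rpredN. Qed.

Definition ppoly (p : nat) (a b x : int) : int := x ^+ p + a * x + b.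

Section PermutationPolynomial.

Variables (p : nat) (a b : int).

Local Notation P := (ppoly p a b).
Local Notation D h x := (P (x + h) - P x).
Local Notation D2 h k x := (P (x + h + k) - P (x + h) - P (x + k) + P x).

Lemma ppoly_congr {N x y : int} : (N %| x - y)%Z -> (N %| P x - P y)%Z.
Proof.
move=> Nxy; have -> : P x - P y = (x ^+ p - y ^+ p) + a * (x - y) by rewrite /ppoly; ring.
by rewrite rpredD ?dvdz_mull ?dvdz_subX.
Qed.

Lemma ppoly_diff_sub0 h x : D h x - D h 0 = D2 x h 0.
Proof. by rewrite !add0r; ring. Qed.

Section FermatModulus.

Context {r : nat}.
Hypothesis fermat_r : forall z : int, (r%:Z %| z ^+ p - z)%Z.

Lemma ppoly_diff_modr h x : (r%:Z %| D h x - (1 + a) * h)%Z.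
Proof.
have -> : D h x - (1 + a) * h = ((x + h) ^+ p - (x + h)) - (x ^+ p - x) by rewrite /ppoly; ring.
by rewrite rpredB.
Qed.

Lemma ppoly_diff2_modr h k x : (r%:Z %| D2 h k x)%Z.
Proof.
have -> : D2 h k x = (D k (x + h) - (1 + a) * k) - (D k x - (1 + a) * k) by ring.
by rewrite rpredB ?ppoly_diff_modr.
Qed.

Hypotheses (r_prime : prime r) (rNa1 : ~~ (r%:Z %| 1 + a)%Z).

Lemma ppoly_diffN_modr h x : ~~ (r%:Z %| h)%Z -> ~~ (r%:Z %| D h x)%Z.
Proof.
apply: contra => r_dvd; have : (r%:Z %| (1 + a) * h)%Z.
  by rewrite -(rpredBl _ r_dvd) ppoly_diff_modr.
by rewrite Euclid_dvdzM // (negbTE rNa1).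
Qed.

Lemma ppoly_sol_modr (d x h x' h' : int) :
  (r%:Z %| D h x - d)%Z -> (r%:Z %| D h' x' - d)%Z -> (r%:Z %| h - h')%Z.
Proof.
move=> sol sol'; have : (r%:Z %| (1 + a) * (h - h'))%Z.
  have -> : (1 + a) * (h - h') = (D h x - d) - (D h' x' - d)
      - (D h x - (1 + a) * h) + (D h' x' - (1 + a) * h') by ring.
  exact: rpredD (rpredB (rpredB sol sol') (ppoly_diff_modr h x)) (ppoly_diff_modr h' x').
by rewrite Euclid_dvdzM // (negbTE rNa1).
Qed.

End FermatModulus.

Hypothesis p_prime : prime p.

Lemma dvdz_ppoly_diff2 h k x : (p%:Z * h * k %| D2 h k x)%Z.
Proof.
have -> : D2 h k x = (x + h + k) ^+ p - (x + h) ^+ p - (x + k) ^+ p + x ^+ p.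
  by rewrite /ppoly; ring.
exact: dvdz_prime_exprD2.
Qed.

Lemma ppoly_diff_factor h x :
  exists2 G, D h x = h * G & (p%:Z %| G - (h ^+ p.-1 + a))%Z.
Proof.
have /dvdzP[t t_eq] := @dvdz_prime_exprD p x h p_prime.
exists (h ^+ p.-1 + a + t * p%:Z * x).
  have -> : D h x = ((x + h) ^+ p - x ^+ p - h ^+ p) + h ^+ p + a * h by rewrite /ppoly; ring.
  by rewrite t_eq -(prednK (prime_gt0 p_prime)) exprS /=; ring.
by rewrite addrAC subrr add0r -mulrA dvdz_mull // dvdz_mulr.
Qed.

Lemma dvdz_ppoly_diff h x : (h %| D h x)%Z.
Proof. by have [G -> _] := ppoly_diff_factor h x; rewrite dvdz_mulr. Qed.

Hypotheses (pNa : ~~ (p%:Z %| a)%Z) (pNa1 : ~~ (p%:Z %| 1 + a)%Z).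

Lemma ppoly_cofactorN h G : (p%:Z %| G - (h ^+ p.-1 + a))%Z -> ~~ (p%:Z %| G)%Z.
Proof.
have p_gt0 := prime_gt0 p_prime; move=> G_eq; rewrite -(rpredBl _ G_eq) addrAC subrr add0r rpredN.
have [ph | pNh] := boolP (p%:Z %| h)%Z.
  by rewrite rpredDl // dvdz_exp // -subn1 subn_gt0 prime_gt1.
apply: contra pNa1 => pha; have : (p%:Z %| h * (h ^+ p.-1 - 1))%Z.
  by rewrite mulrBr mulr1 -exprS prednK // fermat_littlez.
rewrite Euclid_dvdzM // (negbTE pNh) /= => ph1.
by rewrite -(rpredBl _ pha) (_ : _ - _ = h ^+ p.-1 - 1) //; ring.
Qed.

Lemma dvdz_ppoly_diffX k h x : (p%:Z ^+ k %| D h x)%Z = (p%:Z ^+ k %| h)%Z.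
Proof.
have [G -> /ppoly_cofactorN pNG] := ppoly_diff_factor h x.
by rewrite Gauss_dvdzl // coprimez_primeX.
Qed.

Section GoodShift.

Variables (N u d : int).

(* The congruences that make k |-> k + S multiply the autocorrelation sums of both s o pi
   and s o pi^-1 at lag d by a root of unity different from 1 (see chirp_sum_eq0);
   [N %| D h x - d] says that y = x + h solves pi y = pi x + d mod N. *)
Record good_shift (S : int) : Prop := GoodShift {
  good_shift_diff2 : forall x, (N %| D2 d S x)%Z;
  good_shift_diff2_sol : forall x h, (N %| D h x - d)%Z -> (N %| D2 h S x)%Z;
  good_shift_prod : forall x, (N %| D S x * D d x - D S 0 * D d 0)%Z;
  good_shift_prodN : ~~ (N %| u * (D S 0 * D d 0))%Z;
  good_shift_sol : forall x h x' h',
    (N %| D h x - d)%Z -> (N %| D h' x' - d)%Z -> (N %| S * (h - h'))%Z;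
  good_shift_solN : forall x h, (N %| D h x - d)%Z -> ~~ (N %| u * (S * h))%Z
}.

Section PrimePowerShift.

Variables (j : nat) (S : int).
Hypotheses (N_eq : N = p%:Z ^+ j.+1 * S) (S_neq0 : S != 0).
Hypotheses (d_dvd : (p%:Z ^+ j %| d)%Z) (dN_dvd : ~~ (p%:Z ^+ j.+1 %| d)%Z).
Hypothesis pNu : ~~ (p%:Z %| u)%Z.

Lemma dvdz_primeX_N k : (k <= j.+1)%N -> (p%:Z ^+ k %| N)%Z.
Proof. by move=> k_le; rewrite N_eq dvdz_mulr // dvdz_exp2l. Qed.

Lemma primeX_diff2 h x : (p%:Z ^+ j %| h)%Z -> (N %| D2 h S x)%Z.
Proof.
move=> hj; apply: dvdz_trans (dvdz_ppoly_diff2 h S x).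
by rewrite N_eq exprS dvdz_mul // dvdz_mul.
Qed.

Lemma primeX_sol_val x h : (N %| D h x - d)%Z ->
  (p%:Z ^+ j %| h)%Z /\ ~~ (p%:Z ^+ j.+1 %| h)%Z.
Proof.
move=> sol; have sol_eq k : (k <= j.+1)%N -> (p%:Z ^+ k %| h)%Z = (p%:Z ^+ k %| d)%Z.
  move=> k_le; have kN := dvdz_trans (dvdz_primeX_N _ k_le) sol.
  by rewrite -(dvdz_ppoly_diffX _ _ x) -(rpredBr _ kN) opprB addrC subrK.
by rewrite !sol_eq.
Qed.

Lemma primeX_prod x : (N %| D S x * D d x - D S 0 * D d 0)%Z.
Proof.
have -> : D S x * D d x - D S 0 * D d 0 =
    (D S x - D S 0) * D d x + D S 0 * (D d x - D d 0) by ring.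
have pdiff2 h : (p%:Z * h %| D2 x h 0)%Z.
  by apply: dvdz_trans (dvdz_ppoly_diff2 x h 0); rewrite mulrAC dvdz_mulr.
rewrite !ppoly_diff_sub0 N_eq exprS rpredD //.
  by rewrite mulrAC dvdz_mul ?pdiff2 ?(dvdz_trans d_dvd) ?dvdz_ppoly_diff.
rewrite mulrC dvdz_mul ?dvdz_ppoly_diff //.
by apply: dvdz_trans (pdiff2 d); rewrite dvdz_mul.
Qed.

Lemma primeX_prodN : ~~ (N %| u * (D S 0 * D d 0))%Z.
Proof.
have [GS -> /ppoly_cofactorN pNGS] := ppoly_diff_factor S 0.
have [Gd -> /ppoly_cofactorN pNGd] := ppoly_diff_factor d 0.
have pN : ~~ (p%:Z %| u * GS * Gd)%Z by rewrite !Euclid_dvdzM // !negb_or pNu pNGS pNGd.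
rewrite N_eq (_ : u * (S * GS * (d * Gd)) = S * (d * (u * GS * Gd))); last by ring.
by rewrite [_ ^+ _ * S]mulrC dvdz_mul2l // Gauss_dvdzl ?coprimez_primeX.
Qed.

Lemma primeX_sol x h x' h' :
  (N %| D h x - d)%Z -> (N %| D h' x' - d)%Z -> (N %| S * (h - h'))%Z.
Proof.
move=> sol sol'; have [G eG GE] := ppoly_diff_factor h x.
have [G' eG' G'E] := ppoly_diff_factor h' x'.
have pN : (p%:Z %| N)%Z by rewrite -[p%:Z]expr1 dvdz_primeX_N.
have phh' : (p%:Z %| h - h')%Z.
  exact: ppoly_sol_modr (fermat_littlez p ^~ p_prime) p_prime pNa1 _ _ _ _ _
    (dvdz_trans pN sol) (dvdz_trans pN sol').
have pGG' : (p%:Z %| G - G')%Z.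
  have -> : G - G' = (G - (h ^+ p.-1 + a)) - (G' - (h'^+ p.-1 + a)) + (h ^+ p.-1 - h' ^+ p.-1).
    by ring.
  exact: rpredD (rpredB GE G'E) (dvdz_subX p.-1 phh').
move/primeX_sol_val: (sol') => [h'j _].
have : (p%:Z ^+ j.+1 %| (h - h') * G)%Z.
  have -> : (h - h') * G = (D h x - d) - (D h' x' - d) - h' * (G - G').
    by rewrite eG eG'; ring.
  have pjN := dvdz_primeX_N _ (leqnn j.+1).
  apply: rpredB; first exact: rpredB (dvdz_trans pjN sol) (dvdz_trans pjN sol').
  by rewrite exprSr dvdz_mul.
move/ppoly_cofactorN: GE => pNG; rewrite Gauss_dvdzl ?coprimez_primeX // => hh'.
by rewrite N_eq [S * _]mulrC dvdz_mul2r.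
Qed.

Lemma primeX_solN x h : (N %| D h x - d)%Z -> ~~ (N %| u * (S * h))%Z.
Proof.
move=> /primeX_sol_val[_ hN].
by rewrite N_eq [_ ^+ _ * S]mulrC mulrCA dvdz_mul2l // Gauss_dvdzr ?coprimez_primeX.
Qed.

Lemma good_shift_primeX : good_shift S.
Proof.
split=> [x | x h /primeX_sol_val[hj _] | | | |].
- exact: primeX_diff2.
- exact: primeX_diff2.
- exact: primeX_prod.
- exact: primeX_prodN.
- exact: primeX_sol.
- exact: primeX_solN.
Qed.

End PrimePowerShift.

Section PrimeShift.

Variables (q : nat) (T : int).
Hypotheses (q_prime : prime q) (fermat_q : forall z : int, (q%:Z %| z ^+ p - z)%Z).
Hypothesis qNa1 : ~~ (q%:Z %| 1 + a)%Z.
Hypotheses (N_eq : N = q%:Z * T) (qT_coprime : coprimez q%:Z T) (T_neq0 : T != 0).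
Hypotheses (qNd : ~~ (q%:Z %| d)%Z) (qNu : ~~ (q%:Z %| u)%Z).

Lemma prime_diff2 h x : (N %| D2 h T x)%Z.
Proof.
rewrite N_eq Gauss_dvdz // ppoly_diff2_modr //=.
exact: dvdz_trans (dvdz_mull _ _) (dvdz_ppoly_diff2 h T x).
Qed.

Lemma prime_prod x : (N %| D T x * D d x - D T 0 * D d 0)%Z.
Proof.
have -> : D T x * D d x - D T 0 * D d 0 =
    (D T x - D T 0) * D d x + D T 0 * (D d x - D d 0) by ring.
rewrite !ppoly_diff_sub0 rpredD //; first by rewrite dvdz_mulr ?prime_diff2.
by rewrite N_eq [q%:Z * _]mulrC dvdz_mul ?dvdz_ppoly_diff ?ppoly_diff2_modr.
Qed.

Lemma prime_prodN : ~~ (N %| u * (D T 0 * D d 0))%Z.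
Proof.
have qNT : ~~ (q%:Z %| T)%Z by rewrite dvdzE /= -prime_coprime.
have /dvdzP[G GE] := dvdz_ppoly_diff T 0.
have /andP[qNG _] : ~~ (q%:Z %| G)%Z && ~~ (q%:Z %| T)%Z.
  by rewrite -negb_or -Euclid_dvdzM // -GE (ppoly_diffN_modr fermat_q q_prime qNa1).
rewrite N_eq GE (_ : u * (G * T * D d 0) = T * (u * G * D d 0)); last by ring.
rewrite [q%:Z * _]mulrC dvdz_mul2l // !Euclid_dvdzM // !negb_or qNu qNG.
by rewrite (ppoly_diffN_modr fermat_q q_prime qNa1).
Qed.

Lemma dvdz_prime_N : (q%:Z %| N)%Z.
Proof. by rewrite N_eq dvdz_mulr. Qed.

Lemma prime_sol x h x' h' :
  (N %| D h x - d)%Z -> (N %| D h' x' - d)%Z -> (N %| T * (h - h'))%Z.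
Proof.
move=> sol sol'; rewrite N_eq [T * _]mulrC dvdz_mul2r //.
exact: ppoly_sol_modr fermat_q q_prime qNa1 _ _ _ _ _
  (dvdz_trans dvdz_prime_N sol) (dvdz_trans dvdz_prime_N sol').
Qed.

Lemma prime_solN x h : (N %| D h x - d)%Z -> ~~ (N %| u * (T * h))%Z.
Proof.
move=> sol; rewrite N_eq [q%:Z * _]mulrC mulrCA dvdz_mul2l // Euclid_dvdzM // negb_or qNu /=.
apply: contra qNd => qh; have -> : d = D h x - (D h x - d) by ring.
exact: rpredB (dvdz_trans qh (dvdz_ppoly_diff h x)) (dvdz_trans dvdz_prime_N sol).
Qed.

Lemma good_shift_prime : good_shift T.
Proof.
split=> [x | x h _ | | | |].
- exact: prime_diff2.
- exact: prime_diff2.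
- exact: prime_prod.
- exact: prime_prodN.
- exact: prime_sol.
- exact: prime_solN.
Qed.

End PrimeShift.

End GoodShift.

Section Modulus.

Variables (n : nat) (qs : seq nat).
Hypotheses (qs_uniq : uniq qs) (qs_prime : all prime qs) (p_notin_qs : p \notin qs).
Hypothesis fermat_qs : forall q, q \in qs -> forall z : int, (q%:Z %| z ^+ p - z)%Z.
Hypothesis qsNa1 : forall q, q \in qs -> ~~ (q%:Z %| 1 + a)%Z.

Local Notation M := (\prod_(q <- qs) q)%N.
Local Notation N := (p ^ n * M)%N.

Lemma ppoly_inj_modz x y : (N%:Z %| P x - P y)%Z -> (N%:Z %| x - y)%Z.
Proof.
set h := x - y; have -> : x = y + h by rewrite /h; ring.
move=> N_dvd; rewrite PoszM Gauss_dvdz; last first.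
  by rewrite coprimezE /= coprimeXl // coprime_prod_primes.
apply/andP; split.
  rewrite PoszX -(dvdz_ppoly_diffX _ _ y); apply: dvdz_trans N_dvd.
  by rewrite PoszM PoszX dvdz_mulr.
rewrite dvdzE /=; apply: prod_primes_dvdn => // q q_in.
suff : (q%:Z %| h)%Z by [].
have q_pr : prime q by apply: (allP qs_prime).
have qN : (q%:Z %| N%:Z)%Z by rewrite dvdzE /= (big_rem _ q_in) /= mulnCA dvdn_mulr.
move: (dvdz_trans qN N_dvd); apply: contraLR.
exact: ppoly_diffN_modr (fermat_qs q q_in) q_pr (qsNa1 q q_in) h y.
Qed.

Section Shift.

Variables (u : int) (d : nat).
Hypotheses (uN : coprimez u N) (d_gt0 : (0 < d)%N) (d_lt : (d < N)%N).

Lemma exists_good_shift_primeX : ~~ (p ^ n %| d)%N -> exists S : nat, good_shift N u d S.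
Proof.
move=> pNnd; set j := logn p d.
have j_lt : (j < n)%N by rewrite ltnNge -(pfactor_dvdn _ p_prime d_gt0).
exists (p ^ (n - j.+1) * M)%N; apply: (good_shift_primeX _ _ _ j) => //.
- by rewrite -PoszX -PoszM mulnA -expnD subnKC.
- by rewrite eqz_nat -lt0n muln_gt0 expn_gt0 prime_gt0 ?prod_primes_gt0.
- by rewrite -PoszX dvdzE /= pfactor_dvdnn.
- by rewrite -PoszX dvdzE /= pfactor_dvdn // ltnn.
- apply: coprimez_prime_dvdN uN => //.
  by rewrite dvdn_mulr // dvdn_exp // (leq_ltn_trans _ j_lt).
Qed.

Lemma exists_good_shift_prime : (p ^ n %| d)%N -> exists S : nat, good_shift N u d S.
Proof.
move=> pnd; have /hasP[q q_in /= qNd] : has (predC (dvdn^~ d)) qs.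
  rewrite has_predC; apply: contraL d_lt => /allP qs_dvd; rewrite -leqNgt dvdn_leq //.
  by rewrite Gauss_dvd ?pnd ?prod_primes_dvdn // coprimeXl ?coprime_prod_primes.
have q_prime : prime q := allP qs_prime q q_in.
have rem_prime : all prime (rem q qs) by apply/allP => r /mem_rem /(allP qs_prime).
have N_eq : N = (q * (p ^ n * \prod_(r <- rem q qs) r))%N.
  by rewrite (big_rem _ q_in) /= mulnCA.
exists (p ^ n * \prod_(r <- rem q qs) r)%N.
apply: (good_shift_prime _ _ _ q) => //.
- exact: fermat_qs.
- exact: qsNa1.
- by rewrite N_eq PoszM.
- rewrite coprimezE /= coprimeMr coprimeXr ?coprime_prod_primes ?mem_rem_uniqF //.
  by rewrite prime_coprime // dvdn_prime2 //; apply: contraNneq p_notin_qs => <-.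
- by rewrite eqz_nat -lt0n muln_gt0 expn_gt0 prime_gt0 ?prod_primes_gt0.
- by apply: coprimez_prime_dvdN uN => //; rewrite N_eq dvdn_mulr.
Qed.

Lemma exists_good_shift : exists S : nat, good_shift N u d S.
Proof.
by case: (boolP (p ^ n %| d)%N) => [/exists_good_shift_prime | /exists_good_shift_primeX].
Qed.

End Shift.

End Modulus.

End PermutationPolynomial.

Section Zeta.

Variables (R : realType) (N : nat).

Local Notation zeta := (zeta2 R N).
Local Notation theta := (pi / N%:R : R).

Lemma zeta2_exprn k : zeta ^+ k = (cos (theta *+ k) -i* sin (theta *+ k))%C.
Proof.
elim: k => [|k IHk]; first by rewrite expr0 mulr0n cos0 sin0 oppr0.
rewrite exprS IHk mulrS cosD sinD.
by apply/eqP; rewrite eq_complex /=; apply/andP; split; apply/eqP; ring.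
Qed.

Lemma zeta2_mul_conj : zeta * zeta^* = 1.
Proof.
have cs := cos2Dsin2 theta.
by apply/eqP; rewrite eq_complex /=; apply/andP; split; apply/eqP; nra.
Qed.

Lemma zeta2_neq0 : zeta != 0.
Proof. by apply: contra_eq_neq zeta2_mul_conj => ->; rewrite mul0r eq_sym oner_neq0. Qed.

Lemma conj_zeta2_exprz m : (zeta ^ m)^* = zeta ^ (- m).
Proof.
have zetaV : zeta^* = zeta^-1.
  by apply: (mulfI zeta2_neq0); rewrite zeta2_mul_conj mulfV // zeta2_neq0.
by rewrite -exprz_inv -zetaV; exact: fmorphXz.
Qed.

Lemma zeta2_exprzD m k : zeta ^ (m + k) = zeta ^ m * zeta ^ k.
Proof. by rewrite expfzDr // zeta2_neq0. Qed.

Lemma zeta2_exprz_mul_conj m : zeta ^ m * (zeta ^ m)^* = 1.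
Proof. by rewrite conj_zeta2_exprz -zeta2_exprzD subrr expr0z. Qed.

Lemma norm_zeta2_exprz m : `|zeta ^ m| = 1.
Proof.
have /eqP := sqr_normc (zeta ^ m); rewrite zeta2_exprz_mul_conj sqrf_eq1.
by case/orP=> /eqP // norm_eq; have := normr_ge0 (zeta ^ m); rewrite norm_eq ler0N1.
Qed.

Hypothesis N_gt0 : (0 < N)%N.

Lemma zeta2_exprN : zeta ^+ N = -1.
Proof.
rewrite zeta2_exprn (_ : theta *+ N = pi) ?cospi ?sinpi; last first.
  by rewrite -[_ *+ N]mulr_natr divfK // pnatr_eq0 -lt0n.
by apply/eqP; rewrite eq_complex /= oppr0 !eqxx.
Qed.

Lemma zeta2_exprz_mod m k : ((2 * N)%:Z %| m - k)%Z -> zeta ^ m = zeta ^ k.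
Proof.
have zeta_2N : zeta ^+ (2 * N) = 1 by rewrite mulnC exprM zeta2_exprN sqrrN expr1n.
case/dvdzP=> t /eqP; rewrite subr_eq => /eqP ->.
by rewrite zeta2_exprzD -exprz_exp exprzAC -exprnP zeta_2N exp1rz mul1r.
Qed.

Lemma zeta2_expr_neq_pm1 r : (0 < r < N)%N -> (zeta ^+ r != 1) && (zeta ^+ r != -1).
Proof.
move=> /andP[r_gt0 r_lt]; have N_pos : 0 < N%:R :> R by rewrite ltr0n.
have : 0 < sin (theta *+ r).
  rewrite sin_gt0_pi // -[_ *+ r]mulr_natr mulr_gt0 ?divr_gt0 ?pi_gt0 ?ltr0n //=.
  by rewrite mulrAC ltr_pdivrMr // ltr_pM2l ?pi_gt0 // ltr_nat.
rewrite zeta2_exprn !eq_complex /= => sin_gt0; apply/andP; split.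
  by apply/negP => /andP[_ /eqP]; lra.
by apply/negP => /andP[_ /eqP]; lra.
Qed.

Lemma zeta2_exprz_double_eq1 m : zeta ^ (2 * m) = 1 -> (N%:Z %| m)%Z.
Proof.
have N_neq0 : N%:Z != 0 by rewrite eqz_nat -lt0n.
have N_gt0z : 0 < N%:Z by rewrite ltz_nat.
rewrite (@zeta2_exprz_mod _ (2 * (m %% N%:Z)%Z)); last first.
  by rewrite -mulrBr PoszM dvdz_mul // -eqz_mod_dvd modz_mod.
move=> eq1; apply/dvdz_mod0P; move: eq1 (modz_ge0 m N_neq0) (ltz_pmod m N_gt0z).
case: (m %% N%:Z)%Z => // r; rewrite ltz_nat => eq1 _ r_lt.
have : (zeta ^+ r) ^+ 2 == 1 by rewrite -exprM mulnC exprnP PoszM eq1.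
rewrite sqrf_eq1; have [-> //|r_gt0] := posnP r.
have r_range : (0 < r < N)%N by rewrite r_gt0.
by have /andP[/negbTE -> /negbTE ->] := zeta2_expr_neq_pm1 _ r_range.
Qed.

End Zeta.

Definition zc_phase (c x : int) : int := x ^+ 2 + c * x.

Lemma zc_phase_congr (N : nat) (c x y : int) : (2 %| N%:Z + c)%Z -> (N%:Z %| x - y)%Z ->
  ((2 * N)%:Z %| zc_phase c x - zc_phase c y)%Z.
Proof.
move=> /dvdzP[s s_eq] /dvdzP[t t_eq].
have -> : zc_phase c x - zc_phase c y =
    2%:Z * N%:Z * (t * y + s * t) + t * (t - 1) * N%:Z * N%:Z.
  have -> : x = y + t * N%:Z by rewrite -t_eq; ring.
  have -> : c = s * 2%:Z - N%:Z by rewrite -s_eq; ring.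
  by rewrite /zc_phase; ring.
rewrite PoszM rpredD //; first by rewrite dvdz_mulr.
by rewrite dvdz_mulr // dvdz_mul // mulrBr mulr1 -expr2 fermat_littlez.
Qed.

Lemma zcE (R : realType) (N : nat) (u l : int) (k : nat) :
  zc R N u l k = zeta2 R N ^ (u * zc_phase ((N %% 2)%N%:Z + 2 * l) k%:Z).
Proof. by rewrite /zc /zc_phase PoszX; congr (_ ^ _); ring. Qed.

Lemma zc_phase_even (N : nat) (l : int) : (2 %| N%:Z + ((N %% 2)%N%:Z + 2 * l))%Z.
Proof.
apply/dvdzP; exists ((N %/ 2)%N%:Z + (N %% 2)%N%:Z + l).
by rewrite {1}(divn_eq N 2) PoszD PoszM; ring.
Qed.

Lemma sum_ord_shift {V : nmodType} (g : nat -> V) (N S : nat) :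
  (forall k, g (k + N)%N = g k) -> \sum_(k < N) g (k + S)%N = \sum_(k < N) g k.
Proof.
move=> g_per; elim: S => [|S <-]; first by apply: eq_bigr => k _; rewrite addn0.
case: N g_per => [|N] g_per; first by rewrite !big_ord0.
rewrite [LHS]big_ord_recr [RHS]big_ord_recl /= add0n addrC.
have -> : g (N + S.+1)%N = g S by rewrite addnS -addSn addnC g_per.
by congr (_ + _); apply: eq_bigr => k _; rewrite /bump /= add1n addSnnS.
Qed.

Lemma sum_shift_eq0 {V : idomainType} (g : nat -> V) (N S : nat) (c : V) :
  (forall k, g (k + N)%N = g k) -> (forall k, g (k + S)%N = c * g k) -> c != 1 ->
  \sum_(k < N) g k = 0.
Proof.
move=> g_per g_shift c_neq1.
have : (c - 1) * \sum_(k < N) g k = 0.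
  rewrite mulrBl mul1r mulr_sumr -(sum_ord_shift _ _ S g_per); apply/eqP.
  by rewrite subr_eq0; apply/eqP/eq_bigr => k _; rewrite g_shift.
by move/eqP; rewrite mulf_eq0 subr_eq0 (negbTE c_neq1) => /eqP.
Qed.

Section ChirpSum.

Context {R : realType} {N : nat} {u c : int}.
Hypotheses (N_gt0 : (0 < N)%N) (c_even : (2 %| N%:Z + c)%Z).

Local Notation chirp x := (u * zc_phase c x).

(* Replacing k by k + S multiplies the k-th term by zeta^(-2ug). *)
Lemma chirp_sum_eq0 (A B : nat -> int) (S : nat) (g : int) :
  (forall k, (N%:Z %| A (k + N)%N - A k)%Z) -> (forall k, (N%:Z %| B (k + N)%N - B k)%Z) ->
  (forall k, (N%:Z %| (B (k + S)%N - B k) - (A (k + S)%N - A k))%Z) ->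
  (forall k, (N%:Z %| (A (k + S)%N - A k) * (B k - A k) - g)%Z) ->
  ~~ (N%:Z %| u * g)%Z ->
  \sum_(k < N) zeta2 R N ^ (chirp (A k) - chirp (B k)) = 0.
Proof.
move=> A_per B_per AB_shift AB_prod ugN.
pose G k := zeta2 R N ^ (chirp (A k) - chirp (B k)).
apply: (sum_shift_eq0 G _ S (zeta2 R N ^ (2 * - (u * g)))) => [k | k |]; rewrite /G.
- apply: zeta2_exprz_mod => //.
  rewrite (_ : _ - _ = u * (zc_phase c (A (k + N)%N) - zc_phase c (A k))
                      - u * (zc_phase c (B (k + N)%N) - zc_phase c (B k))); last by ring.
  by rewrite rpredB ?dvdz_mull ?zc_phase_congr.
- rewrite -zeta2_exprzD; apply: zeta2_exprz_mod => //.
  set X := A k; set Y := B k; set al := A (k + S)%N - X; set be := B (k + S)%N - Y.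
  have -> : A (k + S)%N = X + al by rewrite /al addrC subrK.
  have -> : B (k + S)%N = Y + be by rewrite /be addrC subrK.
  rewrite (_ : _ - _ = u * (zc_phase c al - zc_phase c be)
      - 2%:Z * u * (al * (Y - X) - g) - 2%:Z * u * Y * (be - al)); last by rewrite /zc_phase; ring.
  have shift_k : (N%:Z %| be - al)%Z := AB_shift k.
  have dvd1 : ((2 * N)%:Z %| u * (zc_phase c al - zc_phase c be))%Z.
    by rewrite dvdz_mull // zc_phase_congr // dvdz_subC.
  have dvd2 : ((2 * N)%:Z %| 2%:Z * u * (al * (Y - X) - g))%Z.
    by rewrite PoszM dvdz_mul ?dvdz_mulr ?AB_prod.
  have dvd3 : ((2 * N)%:Z %| 2%:Z * u * Y * (be - al))%Z.
    by rewrite PoszM dvdz_mul ?dvdz_mulr.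
  exact: rpredB (rpredB dvd1 dvd2) dvd3.
apply: contra ugN => /eqP/zeta2_exprz_double_eq1.
by rewrite rpredN; apply.
Qed.

End ChirpSum.

Section Interleaving.

Variables (R : realType) (p : nat) (a b : int) (N : nat) (u l : int).
Hypothesis N_gt0 : (0 < N)%N.

Local Notation P := (ppoly p a b).
Local Notation PP := (ppmap N p a b).
Local Notation s := (zc R N u l).
Local Notation chirp x := (u * zc_phase ((N %% 2)%N%:Z + 2 * l) x).

Lemma ppmap_congr k : (N%:Z %| (PP k)%:Z - P k%:Z)%Z.
Proof.
have N_neq0 : N%:Z != 0 by rewrite eqz_nat -lt0n.
by rewrite /ppmap gez0_abs ?modz_ge0 // -eqz_mod_dvd modz_mod.
Qed.

Lemma ppmap_lt k : (PP k < N)%N.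
Proof.
by rewrite -ltz_nat /ppmap gez0_abs ?ltz_pmod ?modz_ge0 // ?ltz_nat // eqz_nat -lt0n.
Qed.

Lemma ppoly_addN k : (N%:Z %| P (k + N)%N%:Z - P k%:Z)%Z.
Proof. by apply: ppoly_congr; rewrite PoszD addrAC subrr add0r. Qed.

Lemma modn_congr k d : (N%:Z %| ((k + d) %% N)%N%:Z - (k%:Z + d%:Z))%Z.
Proof. by rewrite -PoszD -eqz_mod_dvd !modz_nat modn_mod. Qed.

Lemma zc_congr {m : nat} {x : int} : (N%:Z %| m%:Z - x)%Z -> s m = zeta2 R N ^ chirp x.
Proof.
move=> m_x; rewrite zcE; apply: zeta2_exprz_mod => //.
by rewrite -mulrBr dvdz_mull // zc_phase_congr // zc_phase_even.
Qed.

Lemma norm_zc (m : nat) : `|s m| = 1.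
Proof. by rewrite zcE norm_zeta2_exprz. Qed.

Lemma ppmap_inj : (forall x y : int, (N%:Z %| P x - P y)%Z -> (N%:Z %| x - y)%Z) ->
  {in gtn N &, injective PP}.
Proof.
move=> P_inj x y x_lt y_lt PPxy; apply: eqn_dvdz_small x_lt y_lt (P_inj _ _ _).
apply: (@dvdz_sub_trans _ _ (PP x)%:Z); first by rewrite dvdz_subC ppmap_congr.
by rewrite PPxy ppmap_congr.
Qed.

Lemma autocorr_ppmap_eq0 (d S : nat) :
  good_shift p a b N u d S -> autocorr N (fun k => s (PP k)) d = 0.
Proof.
case=> diff2 _ prod prodN _ _; rewrite /autocorr.
have term k : s (PP k) * (s (PP ((k + d) %% N)))^* =
    zeta2 R N ^ (chirp (P k%:Z) - chirp (P (k%:Z + d%:Z))).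
  rewrite (zc_congr (ppmap_congr k)) (@zc_congr _ (P (k%:Z + d%:Z))).
    by rewrite conj_zeta2_exprz -zeta2_exprzD.
  have := rpredD (ppmap_congr ((k + d) %% N)) (ppoly_congr p a b (modn_congr k d)).
  by rewrite addrA subrK.
under eq_bigr => k _ do rewrite term.
apply: (chirp_sum_eq0 N_gt0 (zc_phase_even N l) (fun k => P k%:Z) (fun k => P (k%:Z + d%:Z)) S
  ((P (0 + S%:Z) - P 0) * (P (0 + d%:Z) - P 0))) => [k|k|k|k|].
- exact: ppoly_addN.
- by apply: ppoly_congr; rewrite PoszD (_ : _ - _ = N%:Z) //; ring.
- rewrite (_ : forall X Y Z W : int, X - Y - (Z - W) = X - Y - Z + W); last by move=> *; ring.
  by rewrite PoszD (addrAC k%:Z); exact: diff2.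
- by rewrite PoszD; exact: prod.
- exact: prodN.
Qed.

Section InverseInterleaving.

Variables (sigma : nat -> nat) (d S : nat).
Hypothesis P_inj : forall x y : int, (N%:Z %| P x - P y)%Z -> (N%:Z %| x - y)%Z.
Hypothesis sigma_inv : forall k, (k < N)%N -> (sigma k < N)%N /\ PP (sigma k) = k.
Hypothesis gs : good_shift p a b N u d S.

(* y x = pi^-1 (pi x + d); reindexing by pi turns the autocorrelation of s o pi^-1 into
   a sum over x of s x * (s (y x))^*. *)
Let y x := sigma ((PP x + d) %% N).

Lemma sigma_ppmap x : (x < N)%N -> sigma (PP x) = x.
Proof.
have [sigma_lt PP_sigma] := sigma_inv _ (ppmap_lt x).
by move=> x_lt; apply: (ppmap_inj P_inj); rewrite ?inE.
Qed.

Lemma ppmap_inv_sol x : (N%:Z %| P (y x)%:Z - P x%:Z - d%:Z)%Z.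
Proof.
have [_ PP_y] := sigma_inv _ (ltn_pmod (PP x + d) N_gt0).
have := rpredB (ppmap_congr (y x)) (rpredD (ppmap_congr x) (modn_congr (PP x) d)).
by rewrite PP_y (_ : _ - _ = - (P (y x)%:Z - P x%:Z - d%:Z)) ?rpredN //; ring.
Qed.

Lemma ppmap_inv_per x : y (x + N) = y x.
Proof.
rewrite /y; congr (sigma ((_ + d) %% N)); apply: (eqn_dvdz_small (ppmap_lt _) (ppmap_lt _)).
apply: dvdz_sub_trans (ppmap_congr _) _; apply: dvdz_sub_trans (ppoly_addN x) _.
by rewrite dvdz_subC ppmap_congr.
Qed.

Lemma ppmap_inv_step x : (N%:Z %| (y (x + S))%:Z - ((y x)%:Z + S%:Z))%Z.
Proof.
apply: P_inj; have y_eq : x%:Z + ((y x)%:Z - x%:Z) = (y x)%:Z by rewrite (addrC x%:Z) subrK.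
have [_ diff2_sol _ _ _ _] := gs.
have := diff2_sol x%:Z ((y x)%:Z - x%:Z); rewrite y_eq => /(_ (ppmap_inv_sol x)) diff2.
have -> : P (y (x + S))%:Z - P ((y x)%:Z + S%:Z) =
    (P (y (x + S))%:Z - P (x + S)%N%:Z - d%:Z)
    - (P ((y x)%:Z + S%:Z) - P (y x)%:Z - P (x%:Z + S%:Z) + P x%:Z)
    - (P (y x)%:Z - P x%:Z - d%:Z) by rewrite PoszD; ring.
exact: rpredB (rpredB (ppmap_inv_sol (x + S)) diff2) (ppmap_inv_sol x).
Qed.

Lemma autocorr_inverse_eq0 : autocorr N (fun k => s (sigma k)) d = 0.
Proof.
have [_ _ _ _ shift_sol shift_solN] := gs.
have sol x : (N%:Z %| P (x%:Z + ((y x)%:Z - x%:Z)) - P x%:Z - d%:Z)%Z.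
  by rewrite (addrC x%:Z) subrK ppmap_inv_sol.
pose h (x : 'I_N) : 'I_N := Ordinal (ppmap_lt x).
have h_inj : injective h.
  by move=> x1 x2 /(congr1 val) /(ppmap_inj P_inj) x12; apply/val_inj/x12; rewrite inE.
rewrite /autocorr (reindex_inj h_inj) /=.
under eq_bigr => x _ do rewrite sigma_ppmap // !zcE conj_zeta2_exprz -zeta2_exprzD.
apply: (chirp_sum_eq0 N_gt0 (zc_phase_even N l) (fun x => x%:Z) (fun x => (y x)%:Z) S
  (S%:Z * (y 0)%:Z)) => [k|k|k|k|].
- by rewrite PoszD addrAC subrr add0r.
- by rewrite ppmap_inv_per subrr.
- by rewrite PoszD (_ : _ - _ = (y (k + S))%:Z - ((y k)%:Z + S%:Z)) ?ppmap_inv_step //; ring.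
- rewrite PoszD (_ : _ - _ = S%:Z * (((y k)%:Z - k%:Z) - ((y 0)%:Z - 0))); last by ring.
  exact: shift_sol (sol k) (sol 0).
- by have := shift_solN _ _ (sol 0); rewrite subr0.
Qed.

End InverseInterleaving.

End Interleaving.

Theorem theorem1 (R : realType) (p n : nat) (qs : seq nat) (a b u l : int) :
  prime p -> (3 <= p)%N -> (2 <= n)%N ->
  uniq qs -> all prime qs -> p \notin qs ->
  (forall q, q \in qs -> (q.-1 %| p.-1)%N) ->
  ~~ (p%:Z %| a)%Z -> ~~ (p%:Z %| a + 1)%Z ->
  (forall q, q \in qs -> ~~ (q%:Z %| a + 1)%Z) ->
  let N := (p ^ n * \prod_(q <- qs) q)%N in
  coprimez u N%:Z ->
  let PP := ppmap N p a b in
  let s := zc R N u l in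
  (* pi permutes Z_N *)
  {in gtn N &, injective PP} /\
  (* (i) s o pi is CAZAC *)
  CAZAC N (fun k => s (PP k)) /\
  (* (ii) s o pi^{-1} is CAZAC, pi^{-1} being the inverse permutation of Z_N *)
  (forall sigma : nat -> nat,
     (forall k, (k < N)%N -> (sigma k < N)%N /\ PP (sigma k) = k) ->
     CAZAC N (fun k => s (sigma k))).
Proof.
move=> p_prime _ _ qs_uniq qs_prime p_notin qs_fermat pNa.
rewrite addrC => pNa1 qsNa1 N uN PP s.
have fermat_qs q : q \in qs -> forall z : int, (q%:Z %| z ^+ p - z)%Z.
  move=> q_in z; apply: fermat_littlez_gen (prime_gt0 p_prime).
    exact: (allP qs_prime).
  exact: qs_fermat.
have N_gt0 : (0 < N)%N by rewrite muln_gt0 expn_gt0 prime_gt0 ?prod_primes_gt0.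
have P_inj x y : (N%:Z %| ppoly p a b x - ppoly p a b y)%Z -> (N%:Z %| x - y)%Z.
  exact: ppoly_inj_modz.
have shift d : (0 < d)%N -> (d < N)%N -> exists S : nat, good_shift p a b N u d S.
  exact: exists_good_shift.
split; first exact: ppmap_inj.
split=> [|sigma sigma_inv]; split=> [k _|d d_gt0 d_lt]; rewrite ?norm_zc //;
  have [S gs] := shift d d_gt0 d_lt.
  exact: autocorr_ppmap_eq0 gs.
exact: autocorr_inverse_eq0 P_inj sigma_inv gs.
Qed.
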